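(* Let $U$ be a VLA-J-SS. Then $U$ satisfies the half Jacobi identity if and only if it satisfies the half commutator formula: for all homogeneous $u,v,w\in U$ and all $m,n\in\mathbb{N}$, $$u_m(v_nw)-\varepsilon_{u,v}v_n(u_mw)=\sum_{i\ge0}\binom{m}{i}(u_iv)_{m+n-i}w .$$
   Context: All spaces over $\mathbb{C}$; $\mathbb{N}=\{0,1,2,\dots\}$; $\varepsilon_{u,v}=(-1)^{|u||v|}$. A VLA-J-SS is a $\mathbb{Z}_2$-graded space $U$ with an even linear operator $D$ and bilinear products $u_nv$ ($n\in\mathbb{N}$) such that for homogeneous $u,v$: $u_nv=0$ for $n$ large; $(Du)_nv=-nu_{n-1}v$ (read as $0$ for $n=0$); $D(u_nv)=(Du)_nv+u_n(Dv)$; $|u_nv|=|u|+|v|$. The half Jacobi identity is: for all homogeneous $u,v,w\in U$ and all $k,m,n\in\mathbb{N}$, $\sum_{i\ge0}(-1)^i\binom{k}{i}(u_{m+k-i}(v_{n+i}w)-\varepsilon_{u,v}(-1)^kv_{n+k-i}(u_{m+i}w))=\sum_{i\ge0}\binom{m}{i}(u_{k+i}v)_{m+n-i}w$. *)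

From HB Require Import structures.
From mathcomp Require Import all_boot all_order all_algebra.
From mathcomp Require Import complex.
From mathcomp Require Import Rstruct.
Set Implicit Arguments. Unset Strict Implicit. Unset Printing Implicit Defensive.
Import Order.TTheory GRing.Theory Num.Theory.
Local Open Scope ring_scope.

Definition CC : fieldType := (Rdefinitions.R)[i].

(* Z_2 is modelled by bool, with addition addb.  A Z_2-grading of the F-vector
   space V is given by the two projections par false, par true onto the even
   and odd parts (V = V_0 (+) V_1).  u is homogeneous of parity a iff
   par a u = u. *)
Record vlajss (F : fieldType) (V : lmodType F) := VLAJSS {
  par : bool -> V -> V;
  par_lin : forall a (x : F) (u v : V), par a (x *: u + v) = x *: par a u + par a v;
  par_sum : forall u, par false u + par true u = u;
  par_par : forall a b u, par a (par b u) = if a == b then par b u else 0;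
  Dop : V -> V;
  Dop_lin : forall (x : F) (u v : V), Dop (x *: u + v) = x *: Dop u + Dop v;
  Dop_even : forall a u, par a u = u -> par a (Dop u) = Dop u;
  (* the bilinear products u_n v = prod n u v *)
  prod : nat -> V -> V -> V;
  prod_linl : forall n (x : F) (u u' w : V),
      prod n (x *: u + u') w = x *: prod n u w + prod n u' w;
  prod_linr : forall n (x : F) (u w w' : V),
      prod n u (x *: w + w') = x *: prod n u w + prod n u w';
  prod_trunc : forall a b u v, par a u = u -> par b v = v ->
      exists N, forall n, (N <= n)%N -> prod n u v = 0;
  prod_D : forall a b u v n, par a u = u -> par b v = v ->
      prod n (Dop u) v = - (prod n.-1 u v *+ n);
  D_prod : forall a b u v n, par a u = u -> par b v = v ->
      Dop (prod n u v) = prod n (Dop u) v + prod n u (Dop v);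
  prod_par : forall a b u v n, par a u = u -> par b v = v ->
      par (a (+) b) (prod n u v) = prod n u v
}.

Definition homog (F : fieldType) (V : lmodType F) (U : vlajss V) (a : bool) (u : V) :=
  par U a u = u.

(* epsilon_{u,v} = (-1)^{|u||v|} for u of parity a and v of parity b. *)
Definition eps (F : fieldType) (a b : bool) : F := (-1) ^+ (a && b).

(* Half Jacobi identity; the sums over i >= 0 are finite since the binomial
   coefficients vanish for i > k (resp. i > m). *)
Definition half_jacobi (F : fieldType) (V : lmodType F) (U : vlajss V) : Prop :=
  forall (a b c : bool) (u v w : V), homog U a u -> homog U b v -> homog U c w ->
  forall k m n : nat,
    \sum_(i < k.+1)
       (((-1) ^+ i) *+ 'C(k, i)) *:
         (prod U (m + k - i) u (prod U (n + i) v w)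
          - (eps F a b * (-1) ^+ k) *: prod U (n + k - i) v (prod U (m + i) u w))
    = \sum_(i < m.+1) prod U (m + n - i) (prod U (k + i) u v) w *+ 'C(m, i).

Definition half_commutator (F : fieldType) (V : lmodType F) (U : vlajss V) : Prop :=
  forall (a b c : bool) (u v w : V), homog U a u -> homog U b v -> homog U c w ->
  forall m n : nat,
    prod U m u (prod U n v w) - eps F a b *: prod U n v (prod U m u w)
    = \sum_(i < m.+1) prod U (m + n - i) (prod U i u v) w *+ 'C(m, i).

From mathcomp Require Import all_boot all_order all_algebra.
Set Implicit Arguments. Unset Strict Implicit. Unset Printing Implicit Defensive.
Import Order.TTheory GRing.Theory Num.Theory.
Local Open Scope ring_scope.

(* Let (delta f) m n = f (m+1) n - f m (n+1).  By Pascal's rule, both sides of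
   the half Jacobi identity at (k, m, n) are delta^k applied at (m, n) to the
   two sides of the half commutator formula; the sign (-1)^k arises because
   delta anticommutes with exchanging the two arguments.  So the half
   commutator formula is the case k = 0 and implies every other case.  No
   axiom of a VLA-J-SS is used. *)

Section IteratedDifference.
Variables (R : pzRingType) (V : lmodType R).
Implicit Types (f g : nat -> nat -> V).

Definition delta f m n : V := f m.+1 n - f m n.+1.

Lemma iter_deltaS k f m n :
  iter k.+1 delta f m n = iter k delta f m.+1 n - iter k delta f m n.+1.
Proof. by []. Qed.

Lemma eq_iter_delta k f g : (forall m n, f m n = g m n) ->
  forall m n, iter k delta f m n = iter k delta g m n.
Proof. by move=> efg; elim: k => [|k IH] m n; rewrite ?efg // !iter_deltaS !IH. Qed.

Lemma iter_deltaB k f g c m n :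
  iter k delta (fun m n => f m n - c *: g m n) m n
  = iter k delta f m n - c *: iter k delta g m n.
Proof.
elim: k m n => [|k IH] m n //.
by rewrite !iter_deltaS !IH scalerBr !opprD addrACA.
Qed.

Lemma iter_delta_swap k f m n :
  iter k delta (fun m n => f n m) m n = (-1) ^+ k *: iter k delta f n m.
Proof.
elim: k m n => [|k IH] m n; first by rewrite scale1r.
by rewrite !iter_deltaS !IH exprS mulN1r scaleNr -scalerBr -scalerN opprB.
Qed.

Lemma iter_delta_binomial k f m n :
  iter k delta f m n
  = \sum_(i < k.+1) ((-1) ^+ i *+ 'C(k, i)) *: f (m + k - i)%N (n + i)%N.
Proof.
elim: k m n => [|k IH] m n.
  by rewrite big_ord1 expr0 mulr1n scale1r addn0 subn0 addn0.
rewrite iter_deltaS !IH [RHS]big_ord_recl.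
under [in RHS]eq_bigr => i _ do rewrite lift0 binS mulrnDr scalerDl.
rewrite big_split /= addrA; congr (_ + _).
  rewrite big_ord_recl big_ord_recr /= !bin0 bin_small // mulr0n scale0r addr0.
  by rewrite addSnnS; congr (_ + _); apply: eq_bigr.
rewrite -sumrN; apply: eq_bigr => i _.
by rewrite exprS mulN1r mulNrn scaleNr addnS subSS addSnnS.
Qed.

Definition binomial_sum g k m n : V :=
  \sum_(i < m.+1) g (m + n - i)%N (k + i)%N *+ 'C(m, i).

Lemma binomial_sumSm g k m n :
  binomial_sum g k m.+1 n = binomial_sum g k m n.+1 + binomial_sum g k.+1 m n.
Proof.
rewrite /binomial_sum big_ord_recl.
under eq_bigr => i _ do rewrite lift0 binS mulrnDr.
rewrite big_split /= addrA; congr (_ + _).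
  rewrite [in RHS]big_ord_recl big_ord_recr /= !bin0 bin_small // mulr0n addr0.
  by rewrite addSnnS; congr (_ + _); apply: eq_bigr.
by apply: eq_bigr => i _; rewrite !addSn addnS subSS.
Qed.

Lemma binomial_sum_iter_delta g k m n :
  binomial_sum g k m n = iter k delta (binomial_sum g 0) m n.
Proof.
elim: k m n => [|k IH] m n //.
by rewrite iter_deltaS -!IH binomial_sumSm addrC addKr.
Qed.

End IteratedDifference.

Arguments delta {R V} f m n.

Section HalfJacobiAsIteratedDifference.
Variables (F : fieldType) (V : lmodType F) (U : vlajss V) (a b : bool) (u v w : V).

Lemma half_jacobi_lhs_iter_delta k m n :
  \sum_(i < k.+1) (((-1) ^+ i) *+ 'C(k, i)) *:
     (prod U (m + k - i) u (prod U (n + i) v w)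
      - (eps F a b * (-1) ^+ k) *: prod U (n + k - i) v (prod U (m + i) u w))
  = iter k delta
      (fun m n => prod U m u (prod U n v w) - eps F a b *: prod U n v (prod U m u w)) m n.
Proof.
rewrite iter_deltaB (iter_delta_swap _ (fun n m => prod U n v (prod U m u w))).
rewrite !iter_delta_binomial scalerA !scaler_sumr -sumrB.
by apply: eq_bigr => i _; rewrite scalerBr !scalerA mulrC.
Qed.

Lemma half_jacobi_rhs_iter_delta k m n :
  \sum_(i < m.+1) prod U (m + n - i) (prod U (k + i) u v) w *+ 'C(m, i)
  = iter k delta
      (fun m n => \sum_(i < m.+1) prod U (m + n - i) (prod U i u v) w *+ 'C(m, i)) m n.
Proof. exact: (binomial_sum_iter_delta (fun p q => prod U p (prod U q u v) w)). Qed.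

End HalfJacobiAsIteratedDifference.

Theorem lemma6p1 (V : lmodType CC) (U : vlajss V) :
  half_jacobi U <-> half_commutator U.
Proof.
split=> H a b c u v w hu hv hw.
  move=> m n; have := H a b c u v w hu hv hw 0%N m n.
  by rewrite half_jacobi_lhs_iter_delta half_jacobi_rhs_iter_delta.
move=> k m n; rewrite half_jacobi_lhs_iter_delta half_jacobi_rhs_iter_delta.
exact: (eq_iter_delta _ (H a b c u v w hu hv hw)).
Qed.
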